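(* Let $r\ge2$ and $n\ge 2r$. An $r$-cgh $H\subseteq\binom{\Omega_n}{r}$ is $M_1^{(r)}$-saturated if and only if $H=H_n^{(r)}(C)$ for some $\ell\ge1$ and some $r$-valid tuple $C=(w_1,\dots,w_{2\ell+1})$.
   Context: $\Omega_n=\{v_0,\dots,v_{n-1}\}$ with cyclic order $v_0<\dots<v_{n-1}<v_0$ (indices mod $n$). A cgh is a family of subsets (edges) of $\Omega_n$; an $r$-cgh has all edges of size $r$. $M_1^{(r)}$ is the $r$-cgh with edges $\{v_0,\dots,v_{r-1}\}$ and $\{v_r,\dots,v_{2r-1}\}$ on $\Omega_{2r}$. $H$ contains a copy of $M_1^{(r)}$ iff it has two edges $h_1,h_2$ and vertices $u\neq u'$ with $h_1\subseteq[u,u']$ and $h_2\cap[u,u']=\emptyset$ (two edges separated by a chord). $H$ is $M_1^{(r)}$-saturated if it contains no such pair but adding any $e\in\binom{\Omega_n}{r}\setminus H$ creates one. For distinct vertices $u,w$, $(u,w)$ is the set of vertices strictly between $u$ and $w$ moving clockwise from $u$ to $w$, and $[u,w]=(u,w)\cup\{u,w\}$. A tuple $C=(w_1,\dots,w_{2\ell+1})$ of distinct vertices is semi-valid if $w_1<w_3<\dots<w_{2\ell+1}<w_2<w_4<\dots<w_{2\ell}<w_1$ in clockwise cyclic order, and $r$-valid if moreover $|[w_i,w_{i-1}]|\ge r$ for all $i$ (indices mod $2\ell+1$). $H_n^{(r)}(C)=\{e\in\binom{\Omega_n}{r}: e\cap[w_i,w_{i-1}]\neq\emptyset\ \forall i\in\{1,\dots,2\ell+1\}\}$,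 indices mod $2\ell+1$. *)

(* Vertices of Omega_n are 'I_n, with v_i = i and the
   cyclic (clockwise) order 0 < 1 < ... < n-1 < 0. *)
From mathcomp Require Import all_boot.
Set Implicit Arguments. Unset Strict Implicit. Unset Printing Implicit Defensive.

(* closed clockwise interval [u, w]: vertices reached moving clockwise from u
   until w (both included). Used for distinct u, w. *)
Definition cint (n : nat) (u w : 'I_n) : {set 'I_n} :=
  [set x : 'I_n | (x + n - u) %% n <= (w + n - u) %% n].

Definition is_rcgh (n r : nat) (H : {set {set 'I_n}}) : Prop :=
  forall e, e \in H -> #|e| = r.

(* H contains a copy of M_1^(r): two edges separated by a chord *)
Definition contains_M1 (n : nat) (H : {set {set 'I_n}}) : Prop :=
  exists h1 h2 (u u' : 'I_n),
    [/\ h1 \in H, h2 \in H, u != u', h1 \subset cint u u'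
      & h2 :&: cint u u' = set0].

Definition M1_saturated (n r : nat) (H : {set {set 'I_n}}) : Prop :=
  ~ contains_M1 H /\
  forall e : {set 'I_n}, #|e| = r -> e \notin H -> contains_M1 (e |: H).

(* A tuple C = (w_1, ..., w_{2l+1}) is given by w : nat -> 'I_n, only the
   values at 1..2l+1 matter.  wc l w i = w_i with indices taken mod 2l+1
   (representatives in 1..2l+1). *)
Definition wc (n l : nat) (w : nat -> 'I_n) (i : nat) : 'I_n :=
  let j := i %% (2 * l).+1 in w (if j == 0 then (2 * l).+1 else j).

(* a sequence of vertices is in strict clockwise cyclic order
   (in particular its entries are distinct) *)
Definition cyc_ordered (n : nat) (s : seq 'I_n) : Prop :=
  exists k, sorted (fun a b : 'I_n => (a < b)%N) (rot k s).

Definition semi_valid (n l : nat) (w : nat -> 'I_n) : Prop :=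
  cyc_ordered ([seq w (2 * i).+1 | i <- iota 0 l.+1] ++
               [seq w (2 * i).+2 | i <- iota 0 l]).

Definition r_valid (n r l : nat) (w : nat -> 'I_n) : Prop :=
  semi_valid l w /\
  forall i, 1 <= i <= (2 * l).+1 -> r <= #|cint (wc l w i) (wc l w i.-1)|.

Definition Hc (n r l : nat) (w : nat -> 'I_n) : {set {set 'I_n}} :=
  [set e : {set 'I_n} | (#|e| == r) &&
     [forall i : 'I_(2 * l).+1,
        e :&: cint (wc l w i.+1) (wc l w i) != set0]].

From mathcomp Require Import all_boot zify.
Set Implicit Arguments. Unset Strict Implicit. Unset Printing Implicit Defensive.

(* For points q_0 < ... < q_2l of the
   cycle, the long arc j is [q_j, q_(j+l)] (indices mod 2l+1), and Kfam r l q
   is the family of r-sets meeting every long arc.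
   - Kfam is M_1-free: a chord [u, u'] separating two of its members would force
     every arc to contain {u', u'+1} or {u-1, u}, but arcs j and j+l+1 share
     only q_j, so each such pair lies in at most l of the 2l+1 arcs.
   - If all arcs have >= r vertices, Kfam is saturated: an r-set missing arc j
     is separated by [q_j, q_(j+l)] from a member inside that arc.
   - H_n^(r)(C) is Kfam for the increasing rotation of w_1, w_3, .., w_2, w_4, ..
     ([Hc_Kfam]); this gives the "if" direction ([Hc_saturated]).
   - Conversely, for saturated H call [u, v] full if it contains an edge.  The
     minimal full intervals [s, tau s] have distinct starts, tau permutes the
     starts, and comparing cyclic lengths shows there are 2l+1 starts with
     tau q_j = q_(j+l); then H = Kfam ([saturated_Kfam]), giving "only if". *)

Lemma modn_lt_double a n : a < n + n -> a %% n = if a < n then a else a - n.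
Proof.
case: ifP => a_lt_n a_small; first by rewrite modn_small.
have -> : a = (a - n) + n by lia.
by rewrite modnDr modn_small; lia.
Qed.

Lemma in_cint n (u v x : 'I_n) : (x \in cint u v) =
  ((u <= v) && (u <= x) && (x <= v)) || ((v < u) && ((u <= x) || (x <= v))).
Proof.
rewrite /cint inE.
have hu := ltn_ord u; have hv := ltn_ord v; have hx := ltn_ord x.
rewrite (modn_lt_double (_ : x + n - u < n + n)); last by lia.
rewrite (modn_lt_double (_ : v + n - u < n + n)); last by lia.
case: ifP => ?; case: ifP => ?; lia.
Qed.

Lemma val_ordS n (x : 'I_n) :
  (x.+1 < n /\ ordS x = x.+1 :> nat) \/ (x.+1 = n /\ ordS x = 0 :> nat).
Proof.
have hx := ltn_ord x; rewrite /ordS /=.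
case: (ltnP x.+1 n) => h; [left | right]; first by rewrite modn_small.
have -> : x.+1 = n by lia.
by rewrite modnn.
Qed.

Lemma val_ord_pred n (x : 'I_n) :
  (0 < x /\ ord_pred x = x.-1 :> nat) \/ (x = 0 :> nat /\ ord_pred x = n.-1 :> nat).
Proof.
have hx := ltn_ord x; rewrite /ord_pred /=.
case: (posnP x) => h; [right | left].
  by rewrite h add0n modn_small //; lia.
have -> : (x + n).-1 = x.-1 + n by lia.
by rewrite modnDr modn_small //; lia.
Qed.

Lemma ord_eqE n (x y : 'I_n) : (x == y) = (nat_of_ord x == nat_of_ord y).
Proof. by []. Qed.

(* The
   bounds [x < n] of the vertices involved must be in the goal. *)
Ltac cint_lia :=
  rewrite ?in_cint;
  repeat match goal with
  | |- context [nat_of_ord (@ordS ?n ?x)] =>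
      case: (@val_ordS n x) => [[? ->]|[? ->]]
  | |- context [nat_of_ord (@ord_pred ?n ?x)] =>
      case: (@val_ord_pred n x) => [[? ->]|[? ->]]
  end; lia.

Section CyclicIntervals.
Variable n : nat.
Implicit Types a b c d s t u v x y z : 'I_n.

Lemma cint_first u v : u \in cint u v.
Proof. by move: (ltn_ord u) (ltn_ord v); cint_lia. Qed.

Lemma cint_last u v : v \in cint u v.
Proof. by move: (ltn_ord u) (ltn_ord v); cint_lia. Qed.

Lemma cint1 u : cint u u = [set u].
Proof.
apply/setP => x; rewrite in_set1 ord_eqE.
by move: (ltn_ord u) (ltn_ord x); cint_lia.
Qed.

Lemma cint_all u : cint u (ord_pred u) = setT.
Proof.
by apply/setP => x; rewrite in_setT; move: (ltn_ord u) (ltn_ord x); cint_lia.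
Qed.

Lemma cint_total s t t' : (t \in cint s t') || (t' \in cint s t).
Proof. by move: (ltn_ord s) (ltn_ord t) (ltn_ord t'); cint_lia. Qed.

Lemma cint_antisym s t t' : t \in cint s t' -> t' \in cint s t -> t = t'.
Proof.
move=> h1 h2; apply/eqP; rewrite ord_eqE; move: h1 h2.
by move: (ltn_ord s) (ltn_ord t) (ltn_ord t'); cint_lia.
Qed.

Lemma cint_sub_prefix s t t' : t \in cint s t' -> cint s t \subset cint s t'.
Proof.
move=> h; apply/subsetP => y; move: h.
by move: (ltn_ord s) (ltn_ord t) (ltn_ord t') (ltn_ord y); cint_lia.
Qed.

Lemma cint_meet_cases a b c d x :
  x \in cint a b -> x \in cint c d -> (c \in cint a b) || (a \in cint c d).
Proof.
by move: (ltn_ord a) (ltn_ord b) (ltn_ord c) (ltn_ord d) (ltn_ord x); cint_lia.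
Qed.

Lemma cint_meet_first a b c y :
  c \notin cint a b -> y \in cint a b -> y \in cint c a -> y = a.
Proof.
move=> h1 h2 h3; apply/eqP; rewrite ord_eqE; move: h1 h2 h3.
by move: (ltn_ord a) (ltn_ord b) (ltn_ord c) (ltn_ord y); cint_lia.
Qed.

Lemma cint_succ_sub s t : s != t -> cint (ordS s) t \subset cint s t.
Proof.
rewrite ord_eqE => h; apply/subsetP => y; move: h.
by move: (ltn_ord s) (ltn_ord t) (ltn_ord y); cint_lia.
Qed.

Lemma cint_succ_notin s t : s != t -> s \notin cint (ordS s) t.
Proof. by rewrite ord_eqE; move: (ltn_ord s) (ltn_ord t); cint_lia. Qed.

Lemma cint_succ_proper s t : s != t -> cint (ordS s) t \proper cint s t.
Proof.
move=> st; apply/properP; split; first exact: cint_succ_sub.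
by exists s; [exact: cint_first | exact: cint_succ_notin].
Qed.

Lemma cint_succ_in a b x : x \in cint a b -> x != b -> ordS x \in cint a b.
Proof.
by rewrite ord_eqE; move: (ltn_ord a) (ltn_ord b) (ltn_ord x); cint_lia.
Qed.

Lemma cint_succ_meet s t x : s != t -> x \in cint (ordS t) s -> x \in cint s t -> x = s.
Proof.
rewrite ord_eqE => h1 h2 h3; apply/eqP; rewrite ord_eqE; move: h1 h2 h3.
by move: (ltn_ord s) (ltn_ord t) (ltn_ord x); cint_lia.
Qed.

Lemma ordS_notin_cint s t : s != t -> ordS s \notin cint (ordS t) s.
Proof. by rewrite ord_eqE; move: (ltn_ord s) (ltn_ord t); cint_lia. Qed.

Lemma ordS_neq x : 1 < n -> ordS x != x.
Proof. by rewrite ord_eqE; move: (ltn_ord x); cint_lia. Qed.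

Lemma cint_complement u v y :
  y \notin cint u v -> cint (ordS v) (ord_pred u) = ~: cint u v.
Proof.
move=> h; apply/setP => x; rewrite in_setC; move: h.
by move: (ltn_ord u) (ltn_ord v) (ltn_ord x) (ltn_ord y); cint_lia.
Qed.

Lemma card_cint_split s t : s != t -> #|cint (ordS s) t| + #|cint (ordS t) s| = n.
Proof.
move=> st; have := cint_complement (cint_succ_notin st); rewrite ordSK => ->.
by rewrite cardsC card_ord.
Qed.

Lemma cint_boundary a b u u' y z :
  y \in cint a b -> y \in cint u u' -> z \in cint a b -> z \notin cint u u' ->
  ((u' \in cint a b) && (ordS u' \in cint a b)) ||
  ((ord_pred u \in cint a b) && (u \in cint a b)).
Proof.
rewrite !in_cint.
move: (ltn_ord a) (ltn_ord b) (ltn_ord u) (ltn_ord u') (ltn_ord y) (ltn_ord z).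
case: (val_ordS u') => [[? ->]|[? ->]]; case: (val_ord_pred u) => [[? ->]|[? ->]];
case: (leqP a b) => ?; case: (leqP u u') => ?; rewrite /= ?orbF ?andbT ?andbF; lia.
Qed.

Lemma cint_sub_no_exit a b s t x :
  s \notin cint a b -> x \in cint a b -> x \in cint s t ->
  ~~ ((t \in cint a b) && (ordS t \in cint a b)) -> cint a b \subset cint s t.
Proof.
move=> h1 h2 h3 h4; apply/subsetP => y; move: h1 h2 h3 h4.
by move: (ltn_ord a) (ltn_ord b) (ltn_ord s) (ltn_ord t) (ltn_ord x) (ltn_ord y); cint_lia.
Qed.

Lemma cint_sub_before a b s t :
  s \in cint a b -> t \notin cint a b -> ordS s \notin cint a b ->
  cint a b \subset cint (ordS t) s.
Proof.
move=> h1 h2 h3; apply/subsetP => y; move: h1 h2 h3.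
by move: (ltn_ord a) (ltn_ord b) (ltn_ord s) (ltn_ord t) (ltn_ord y); cint_lia.
Qed.

End CyclicIntervals.

Lemma subset_of_card (T : finType) (A : {set T}) k :
  k <= #|A| -> exists2 B : {set T}, B \subset A & #|B| = k.
Proof.
case/card_geqP => s [s_uniq <- sA]; exists [set x in s].
  by apply/subsetP => x; rewrite inE => /sA.
by rewrite cardsE (card_uniqP s_uniq).
Qed.

Lemma subset_of_card2 (T : finType) (A : {set T}) x y k :
  x \in A -> y \in A -> x != y -> 2 <= k -> k <= #|A| ->
  exists e : {set T}, [/\ e \subset A, #|e| = k, x \in e & y \in e].
Proof.
move=> xA yA xy k2 kA.
have xyA : [set x; y] \subset A by rewrite subUset !sub1set xA yA.
have [B BA cB] : exists2 B : {set T}, B \subset A :\: [set x; y] & #|B| = k - 2.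
  by apply: subset_of_card; rewrite cardsD (setIidPr xyA) cards2 xy; lia.
have xyB : [set x; y] :&: B = set0.
  apply/setP => z; rewrite in_setI in_set0; apply/negP => /andP[zxy /(subsetP BA)].
  by rewrite in_setD zxy.
exists ([set x; y] :|: B); split.
- by rewrite subUset xyA (subset_trans BA) // subsetDl.
- by rewrite cardsU xyB cards0 cards2 xy cB; lia.
- by rewrite !inE eqxx.
- by rewrite !inE eqxx orbT.
Qed.

Definition increasing n m (q : nat -> 'I_n) := forall i j, i < j -> j < m -> q i < q j.

Lemma sorted_increasing n (s : seq 'I_n) x0 :
  sorted (fun a b : 'I_n => a < b) s -> increasing (size s) (nth x0 s).
Proof.
move=> s_sorted i j ij jm.
have tr : transitive (fun a b : 'I_n => a < b) by move=> ? ? ?; apply: ltn_trans.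
by apply: (sorted_ltn_nth tr x0 s_sorted) => //; rewrite inE; lia.
Qed.

Definition cyc a k b :=
  ((a <= b) && (a <= k) && (k <= b)) || ((b < a) && ((a <= k) || (k <= b))).

Section Increasing.
Variables (n m : nat) (q : nat -> 'I_n).
Hypothesis q_incr : increasing m q.

Lemma incr_ltE i j : i < m -> j < m -> (q i < q j) = (i < j).
Proof.
move=> im jm; case: (ltngtP i j) => h.
- by rewrite q_incr.
- by apply/negbTE; rewrite -leqNgt ltnW // q_incr.
- by rewrite h ltnn.
Qed.

Lemma incr_leE i j : i < m -> j < m -> (q i <= q j) = (i <= j).
Proof. by move=> im jm; rewrite leqNgt incr_ltE // -leqNgt. Qed.

Lemma incr_inj i j : i < m -> j < m -> q i = q j -> i = j.
Proof.
move=> im jm /(congr1 val) /eqP; rewrite eqn_leq !incr_leE //.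
by rewrite -eqn_leq => /eqP.
Qed.

Lemma incr_in_cint a k b : a < m -> k < m -> b < m ->
  (q k \in cint (q a) (q b)) = cyc a k b.
Proof. by move=> am km bm; rewrite in_cint /cyc !incr_leE // !incr_ltE. Qed.

End Increasing.

Definition larc n l (q : nat -> 'I_n) j := cint (q j) (q ((j + l) %% (2 * l).+1)).

Definition Kfam n r l (q : nat -> 'I_n) : {set {set 'I_n}} :=
  [set e : {set 'I_n} | (#|e| == r) &&
     [forall j : 'I_(2 * l).+1, e :&: larc l q j != set0]].

Lemma in_Kfam n r l (q : nat -> 'I_n) e : (e \in Kfam r l q) =
  (#|e| == r) && [forall j : 'I_(2 * l).+1, e :&: larc l q j != set0].
Proof. by rewrite inE. Qed.

Section LongArcs.
Variables (n l : nat) (q : nat -> 'I_n).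
Local Notation m := (2 * l).+1.
Hypotheses (l_gt0 : 0 < l) (q_incr : increasing m q).

Lemma larc_opposite j y : j < m ->
  y \in larc l q j -> y \in larc l q ((j + l.+1) %% m) -> y = q j.
Proof.
move=> jm; rewrite /larc.
have -> : ((j + l.+1) %% m + l) %% m = j.
  by rewrite modnDml (_ : j + l.+1 + l = j + m) ?modnDr ?modn_small //; lia.
apply: cint_meet_first.
rewrite (incr_in_cint q_incr) ?ltn_mod // /cyc !modn_lt_double; try lia.
by case: ifP; case: ifP; lia.
Qed.

Lemma larc_has_end j k : j < m -> k < m ->
  (q j \in larc l q k) || (q ((j + l) %% m) \in larc l q k).
Proof.
move=> jm km; rewrite /larc !(incr_in_cint q_incr) ?ltn_mod // /cyc !modn_lt_double; try lia.
by case: ifP; case: ifP; lia.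
Qed.

Definition larcs_through (x : 'I_n) :=
  [set j : 'I_m | (x \in larc l q j) && (ordS x \in larc l q j)].

Lemma in_larcs_through x j :
  (j \in larcs_through x) = (x \in larc l q j) && (ordS x \in larc l q j).
Proof. by rewrite inE. Qed.

(* Since arcs j and j+l+1 share a single vertex, at most l of the 2l+1 arcs
   contain a given pair of consecutive vertices. *)
Lemma card_larcs_through x : 1 < n -> #|larcs_through x| <= l.
Proof.
move=> n_gt1.
pose opp (j : 'I_m) : 'I_m := inord ((j + l.+1) %% m).
have oppE j : opp j = (j + l.+1) %% m :> nat by rewrite inordK // ltn_mod.
have opp_inj : injective opp.
  move=> j1 j2 /(congr1 val); rewrite /= !oppE.
  move: (ltn_ord j1) (ltn_ord j2) => ? ?; rewrite !modn_lt_double; try lia.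
  by case: ifP; case: ifP => ? ? ?; apply: val_inj => /=; lia.
have disj : larcs_through x :&: opp @: larcs_through x = set0.
  apply/setP => j; rewrite in_setI in_set0 in_larcs_through.
  apply/negP => /andP[/andP[xj x1j]].
  case/imsetP => i; rewrite in_larcs_through => /andP[xi x1i] ej.
  move: xj x1j; rewrite ej /larc oppE -/(larc l q _) => xj x1j.
  have := larc_opposite (ltn_ord i) xi xj; have := larc_opposite (ltn_ord i) x1i x1j.
  move=> <- /esym/eqP; exact/negP/ordS_neq.
have := cardsUI (larcs_through x) (opp @: larcs_through x).
rewrite disj cards0 addn0 (card_imset _ opp_inj).
move=> card_union; have := max_card (larcs_through x :|: opp @: larcs_through x).
by rewrite card_ord card_union; lia.
Qed.

(* No two r-sets meeting all long arcs are separated by a chord [u, u']: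
   each arc would contain the boundary pair {u', u'+1} or {u-1, u}. *)
Lemma Kfam_M1_free r : ~ contains_M1 (Kfam r l q).
Proof.
move=> [h1 [h2 [u [u' [h1K h2K uu' h1_in h2_out]]]]].
have n_gt1 : 1 < n.
  by move: uu' (ltn_ord u) (ltn_ord u'); rewrite ord_eqE; lia.
have cover : [set: 'I_m] \subset larcs_through u' :|: larcs_through (ord_pred u).
  apply/subsetP => j _; rewrite in_setU !in_larcs_through ord_predK.
  move: h1K h2K; rewrite !in_Kfam => /andP[_ /forallP/(_ j)/set0Pn[y]].
  rewrite in_setI => /andP[yh1 yj] /andP[_ /forallP/(_ j)/set0Pn[z]].
  rewrite in_setI => /andP[zh2 zj].
  have yu : y \in cint u u' by exact: (subsetP h1_in).
  have zu : z \notin cint u u'.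
    by apply/negP => zu; move/setP: h2_out => /(_ z); rewrite in_setI zh2 zu in_set0.
  by case/orP: (cint_boundary yj yu zj zu) => /andP[-> ->]; rewrite ?orbT.
have := leq_trans (subset_leq_card cover) (leq_card_setU _ _).
move/leq_trans/(_ (leq_add (card_larcs_through u' n_gt1)
                            (card_larcs_through (ord_pred u) n_gt1))).
by rewrite cardsT card_ord; lia.
Qed.

(* If every long arc has at least r >= 2 vertices, an r-set e missing the arc
   [q_j, q_(j+l)] is separated by this chord from a member of the family: an
   r-subset of the arc containing both its ends meets every long arc. *)
Lemma Kfam_saturating r : 2 <= r -> (forall j, j < m -> r <= #|larc l q j|) ->
  forall e : {set 'I_n}, #|e| = r -> e \notin Kfam r l q -> contains_M1 (e |: Kfam r l q).
Proof.
move=> r2 big_arcs e card_e.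
rewrite in_Kfam card_e eqxx /= => /forallPn [j /negPn /eqP e_out].
have jm := ltn_ord j.
pose a := q j; pose b := q ((j + l) %% m).
have ab : a != b.
  apply/negP => /eqP /(incr_inj q_incr jm (ltn_mod _ _)).
  by rewrite modn_lt_double; [case: ifP|]; lia.
have [f [f_in card_f af bf]] :=
  subset_of_card2 (cint_first a b) (cint_last a b) ab r2 (big_arcs _ jm).
have fK : f \in Kfam r l q.
  rewrite in_Kfam card_f eqxx /=; apply/forallP => k; apply/set0Pn.
  by case/orP: (larc_has_end jm (ltn_ord k)) => h; [exists a | exists b]; rewrite inE h ?af ?bf.
exists f, e, a, b; split => //; first by rewrite setU1r.
by rewrite setU11.
Qed.

End LongArcs.

Lemma forall_reindex m (f : nat -> nat) (P : nat -> Prop) :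
  (forall j, j < m -> f j < m) -> (forall p, p < m -> exists2 j, j < m & f j = p) ->
  (forall p, p < m -> P p) <-> (forall j, j < m -> P (f j)).
Proof.
move=> f_lt f_onto; split => [hP j jm | hP p pm]; first exact/hP/f_lt.
by have [j jm <-] := f_onto p pm; apply: hP.
Qed.

Lemma nth_rot (T : Type) (x0 : T) (s : seq T) k i : k <= size s -> i < size s ->
  nth x0 (rot k s) i = nth x0 s ((i + k) %% size s).
Proof.
move=> ks i_lt; rewrite /rot nth_cat size_drop nth_drop.
case: ifP => h; first by rewrite modn_small ?(addnC k) //; lia.
rewrite nth_take; last lia.
by congr nth; rewrite modn_lt_double; [case: ifP|]; lia.
Qed.

Lemma larc_rot n l (s : seq 'I_n) x0 k j : size s = (2 * l).+1 -> k <= size s ->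
  j < size s -> larc l (nth x0 (rot k s)) j = larc l (nth x0 s) ((j + k) %% (2 * l).+1).
Proof.
move=> s_size ks js; rewrite /larc !nth_rot -?s_size ?ltn_mod //; last by rewrite s_size.
by rewrite !modnDml addnAC s_size.
Qed.

Definition semi_seq n l (w : nat -> 'I_n) :=
  [seq w (2 * i).+1 | i <- iota 0 l.+1] ++ [seq w (2 * i).+2 | i <- iota 0 l].

Lemma size_semi_seq n l (w : nat -> 'I_n) : size (semi_seq l w) = (2 * l).+1.
Proof. by rewrite /semi_seq size_cat !size_map !size_iota; lia. Qed.

Lemma nth_semi_seq n l (w : nat -> 'I_n) x0 p : p < (2 * l).+1 ->
  nth x0 (semi_seq l w) p = if p <= l then w (2 * p).+1 else w (2 * (p - l.+1)).+2.
Proof.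
move=> pm; rewrite /semi_seq nth_cat size_map size_iota ltnS.
case: ifP => h; first by rewrite (nth_map 0) ?size_iota // nth_iota.
rewrite (nth_map 0) ?size_iota; last lia.
by rewrite nth_iota; last lia.
Qed.

Lemma wc_pos n l (w : nat -> 'I_n) i : 0 < i <= (2 * l).+1 -> wc l w i = w i.
Proof.
move=> i_range; rewrite /wc.
case: (ltnP i (2 * l).+1) => h; first by rewrite modn_small // ifN //; lia.
have -> : i = (2 * l).+1 by lia.
by rewrite modnn.
Qed.

Lemma wc0 n l (w : nat -> 'I_n) : wc l w 0 = w (2 * l).+1.
Proof. by rewrite /wc mod0n. Qed.

Definition tarc n l (w : nat -> 'I_n) i := cint (wc l w i.+1) (wc l w i).

(* Position of w_(i+1) in [semi_seq l w]. *)
Definition semi_pos l i := if odd i then l.+1 + i./2 else i./2.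

Lemma tarc_larc n l (w : nat -> 'I_n) x0 i : i < (2 * l).+1 ->
  tarc l w i = larc l (nth x0 (semi_seq l w)) (semi_pos l i).
Proof.
move=> im; rewrite /tarc /larc (wc_pos _ (_ : 0 < i.+1 <= _)); last lia.
have ei := odd_double_half i; rewrite /semi_pos.
case odd_i: (odd i); rewrite odd_i /= in ei.
- have -> : (l.+1 + i./2 + l) %% (2 * l).+1 = i./2.
    by rewrite modn_lt_double; [case: ifP|]; lia.
  rewrite (wc_pos _ (_ : 0 < i <= _)) ?nth_semi_seq; try lia.
  by rewrite ifN ?ifT; try lia; congr (cint (w _) (w _)); lia.
- rewrite modn_small ?nth_semi_seq; try lia.
  rewrite ifT; last lia.
  case: (posnP i) => [i0 | i_gt0].
    by rewrite i0 wc0 ifT; [congr (cint (w _) (w _)) | ]; lia.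
  by rewrite wc_pos ?ifN; [congr (cint (w _) (w _)) | | ]; lia.
Qed.

Lemma semi_pos_lt l i : i < (2 * l).+1 -> semi_pos l i < (2 * l).+1.
Proof.
have := odd_double_half i; rewrite /semi_pos; case: (odd i) => /=; lia.
Qed.

Lemma semi_pos_onto l p : p < (2 * l).+1 ->
  exists2 i, i < (2 * l).+1 & semi_pos l i = p.
Proof.
move=> pm; case: (leqP p l) => h.
  by exists (2 * p); [lia | rewrite /semi_pos mul2n odd_double doubleK].
exists (2 * (p - l.+1)).+1; first lia.
by rewrite /semi_pos /= mul2n odd_double /= uphalf_double; lia.
Qed.

Lemma tarc_larc_forall n l (w : nat -> 'I_n) x0 k (P : {set 'I_n} -> Prop) :
  k <= (2 * l).+1 ->
  (forall i, i < (2 * l).+1 -> P (tarc l w i)) <->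
  (forall j, j < (2 * l).+1 -> P (larc l (nth x0 (rot k (semi_seq l w))) j)).
Proof.
move=> km; have s_size := size_semi_seq l w.
pose Ps p := P (larc l (nth x0 (semi_seq l w)) p).
apply: (@iff_trans _ (forall p, p < (2 * l).+1 -> Ps p)).
  apply: iff_sym; apply: (iff_trans (forall_reindex Ps (@semi_pos_lt l) (@semi_pos_onto l))).
  by split => h i im; [rewrite (tarc_larc w x0 im) | rewrite /Ps -(tarc_larc w x0 im)]; apply: h.
have shift_onto p : p < (2 * l).+1 ->
    exists2 j, j < (2 * l).+1 & (j + k) %% (2 * l).+1 = p.
  move=> pm; exists ((p + (2 * l).+1 - k) %% (2 * l).+1); first by rewrite ltn_mod.
  rewrite modnDml (_ : p + (2 * l).+1 - k + k = p + (2 * l).+1); last lia.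
  by rewrite modnDr modn_small.
apply: (iff_trans (forall_reindex Ps (fun j _ => ltn_pmod _ (ltn0Sn _)) shift_onto)).
split => h j jm; first by rewrite larc_rot ?s_size //; exact: h.
by rewrite /Ps -larc_rot ?s_size //; exact: h.
Qed.

Lemma Hc_Kfam n r l (w : nat -> 'I_n) x0 k : k <= (2 * l).+1 ->
  Hc r l w = Kfam r l (nth x0 (rot k (semi_seq l w))).
Proof.
move=> km; apply/setP => e; rewrite inE in_Kfam; congr andb.
have := tarc_larc_forall w x0 (fun A => e :&: A != set0) km.
move=> [to_larc to_tarc]; apply/forallP/forallP => h j.
- exact: (to_larc (fun i im => h (Ordinal im))).
- exact: (to_tarc (fun i im => h (Ordinal im))).
Qed.

Lemma r_valid_sizes n r l (w : nat -> 'I_n) :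
  (forall i, 1 <= i <= (2 * l).+1 -> r <= #|cint (wc l w i) (wc l w i.-1)|) <->
  (forall i, i < (2 * l).+1 -> r <= #|tarc l w i|).
Proof.
split => h i im; first exact: h.
by have := h i.-1; rewrite /tarc prednK //; lia.
Qed.

Lemma Hc_saturated n r l (w : nat -> 'I_n) :
  2 <= r -> 0 < l -> r_valid r l w -> M1_saturated r (Hc r l w).
Proof.
move=> r2 l_gt0 [[k sorted_rot] big_arcs]; set s := semi_seq l w.
have s_size : size s = (2 * l).+1 := size_semi_seq l w.
pose k' := if k <= (2 * l).+1 then k else 0.
have k'm : k' <= (2 * l).+1 by rewrite /k'; case: ifP; lia.
have rot_k' : rot k s = rot k' s.
  by rewrite /k'; case: ifP => // h; rewrite rot0 rot_oversize // s_size; lia.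
rewrite (Hc_Kfam r w (w 0) k'm).
have q_incr : increasing (2 * l).+1 (nth (w 0) (rot k' s)).
  by rewrite -s_size -(size_rot k'); apply: sorted_increasing; rewrite -rot_k'.
have [big_larcs _] := tarc_larc_forall w (w 0) (fun A => r <= #|A|) k'm.
split; first exact: Kfam_M1_free.
exact/Kfam_saturating/big_larcs/r_valid_sizes.
Qed.

Lemma contains_M1_sub n (A B : {set {set 'I_n}}) :
  A \subset B -> contains_M1 A -> contains_M1 B.
Proof.
move=> AB [h1 [h2 [u [u' [h1A h2A uu' h1_in h2_out]]]]].
by exists h1, h2, u, u'; split => //; apply: (subsetP AB).
Qed.

Definition cdist m a b := if a <= b then b - a else b + m - a.

Lemma cdistE m a b :
  (a <= b /\ cdist m a b = b - a) \/ (b < a /\ cdist m a b = b + m - a).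
Proof. by rewrite /cdist; case: leqP; [left | right]. Qed.

Lemma cyclic_nondecreasing_const m (f : nat -> nat) : 0 < m ->
  (forall j, j < m -> f j <= f (if j.+1 < m then j.+1 else 0)) ->
  forall j, j < m -> f j = f 0.
Proof.
move=> m_gt0 f_mono.
have up j : j < m -> f 0 <= f j.
  elim: j => [| j IH] jm; first exact: leqnn.
  by have := f_mono j (ltnW jm); rewrite jm; have := IH (ltnW jm); lia.
have down k : k < m -> f (m.-1 - k) <= f m.-1.
  elim: k => [| k IH] km; first by rewrite subn0.
  have km' : m.-1 - k.+1 < m by lia.
  have := f_mono _ km'; rewrite ifT; last lia.
  rewrite (_ : (m.-1 - k.+1).+1 = m.-1 - k); last lia.
  by have := IH (ltnW km); lia.
move=> j jm; apply/eqP; rewrite eqn_leq up // andbT.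
have := down (m.-1 - j); rewrite (_ : m.-1 - (m.-1 - j) = j); last lia.
have last_lt : m.-1 < m by lia.
by have := f_mono _ last_lt; rewrite ifF; lia.
Qed.

Section FullIntervals.
Variables (n r : nat) (H : {set {set 'I_n}}).
Hypotheses (r_ge2 : 2 <= r) (n_ge2r : 2 * r <= n).
Hypotheses (H_r : is_rcgh r H) (H_free : ~ contains_M1 H).
Hypothesis H_sat :
  forall e : {set 'I_n}, #|e| = r -> e \notin H -> contains_M1 (e |: H).
Implicit Types a b c d s t u v x y : 'I_n.

Definition full u v := [exists h in H, h \subset cint u v].

Lemma full_card u v : full u v -> r <= #|cint u v|.
Proof.
by case/existsP => h /andP[hH h_in]; rewrite -(H_r hH); apply: subset_leq_card.
Qed.

Lemma full_neq u v : full u v -> u != v.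
Proof.
move=> uv_full; apply: contraTneq (full_card uv_full) => ->.
by rewrite cint1 cards1 -ltnNge.
Qed.

(* Every edge meets every full interval, otherwise the two would form M_1. *)
Lemma full_meet u v h : full u v -> h \in H -> exists2 x, x \in h & x \in cint u v.
Proof.
case/existsP => h' /andP[h'H h'_in] hH.
case: (set_0Vmem (h :&: cint u v)) => [h_out | [x]]; last by rewrite inE => /andP[]; exists x.
by case: H_free; exists h', h, u, v; split => //; apply: full_neq; apply/existsP; exists h'; rewrite h'H.
Qed.

Lemma full_inter a b c d : full a b -> full c d ->
  exists2 x, x \in cint a b & x \in cint c d.
Proof.
move=> ab_full /existsP [h /andP[hH h_in]].
have [x xh x_in] := full_meet ab_full hH.
by exists x => //; apply: (subsetP h_in).
Qed.

Lemma meets_full_in_H (e : {set 'I_n}) : #|e| = r ->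
  (forall u v, full u v -> exists2 x, x \in e & x \in cint u v) -> e \in H.
Proof.
move=> card_e e_meets; apply/negPn/negP => eH.
have [h1 [h2 [u [u' [h1e h2e uu' h1_in h2_out]]]]] := H_sat card_e eH.
have out z : z \in h2 -> z \notin cint u u'.
  by move=> zh2; apply/negP => zu; move/setP: h2_out => /(_ z); rewrite in_setI zh2 zu in_set0.
have nonempty (h : {set 'I_n}) : h \in e |: H -> exists y, y \in h.
  move=> h_in; apply/set0Pn; rewrite -card_gt0.
  by case/setU1P: h_in => [-> | /H_r ->]; rewrite ?card_e; lia.
(* Of the two separated sets, e is exactly one, and it misses a full interval. *)
move: h1e h2e; rewrite !in_setU1 => /orP[/eqP h1E | h1H] /orP[/eqP h2E | h2H].
- have [y yh1] : exists y, y \in h1 by apply: nonempty; rewrite h1E setU11.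
  by move: (out y); rewrite h2E -h1E yh1 (subsetP h1_in y yh1) => /(_ isT).
- have [y yh2] := nonempty h2 (setU1r _ h2H).
  have compl_full : full (ordS u') (ord_pred u).
    apply/existsP; exists h2; rewrite h2H (cint_complement (out y yh2)) /=.
    by apply/subsetP => z zh2; rewrite in_setC; exact: out.
  have [x xe] := e_meets _ _ compl_full.
  have xu : x \in cint u u' by apply: (subsetP h1_in); rewrite h1E.
  by rewrite (cint_complement (out y yh2)) in_setC xu.
- have uu'_full : full u u' by apply/existsP; exists h1; rewrite h1H h1_in.
  have [x xe xu] := e_meets u u' uu'_full.
  by have := out x; rewrite h2E xe xu => /(_ isT).
- by case: H_free; exists h1, h2, u, u'.
Qed.

Definition minfull u v :=
  full u v && [forall a, forall b, (cint a b \proper cint u v) ==> ~~ full a b].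

Lemma minfull_full u v : minfull u v -> full u v.
Proof. by case/andP. Qed.

Lemma minfull_min u v a b : minfull u v -> cint a b \proper cint u v -> ~~ full a b.
Proof. by case/andP => _ /forallP /(_ a) /forallP /(_ b) /implyP. Qed.

Lemma minfull_neq s t : minfull s t -> s != t.
Proof. by move/minfull_full/full_neq. Qed.

Lemma exists_minfull u v : full u v -> exists a b, minfull a b /\ cint a b \subset cint u v.
Proof.
move=> uv_full.
pose P (p : 'I_n * 'I_n) := full p.1 p.2 && (cint p.1 p.2 \subset cint u v).
have P_uv : P (u, v) by rewrite /P uv_full subxx.
case: (arg_minnP (fun p => #|cint p.1 p.2|) P_uv) => [[a b] /andP[ab_full ab_sub] ab_min].
exists a, b; split => //; rewrite /minfull ab_full /=.
apply/forallP => c; apply/forallP => d; apply/implyP => cd_proper; apply/negP => cd_full.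
have P_cd : P (c, d) by rewrite /P cd_full (subset_trans (proper_sub cd_proper)).
by have := ab_min _ P_cd; have := proper_card cd_proper; rewrite /=; lia.
Qed.

Lemma minfull_hit s t a b : minfull s t -> full a b ->
  (s \in cint a b) || ((t \in cint a b) && (ordS t \in cint a b)).
Proof.
move=> st_min ab_full; apply/negPn/negP; rewrite negb_or => /andP[s_out t_out].
have [x x_ab x_st] := full_inter ab_full (minfull_full st_min).
have ab_sub := cint_sub_no_exit s_out x_ab x_st t_out.
have ab_proper : cint a b \proper cint s t.
  by apply/properP; split => //; exists s; [exact: cint_first | exact: s_out].
by move: (minfull_min st_min ab_proper); rewrite ab_full.
Qed.

Lemma edge_on_ends a b : a != b -> r <= #|cint a b| ->
  exists e : {set 'I_n}, [/\ e \subset cint a b, #|e| = r, a \in e & b \in e].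
Proof. by move=> ab big; apply: subset_of_card2 => //; [exact: cint_first | exact: cint_last]. Qed.

Lemma card_after_minfull s t : minfull s t -> r <= #|cint (ordS t) s|.
Proof.
move=> st_min; have st := minfull_neq st_min.
rewrite leqNgt; apply/negP => small.
have big : r <= #|cint (ordS s) t| by have := card_cint_split st; lia.
have s1t : ordS s != t.
  by apply: contraTneq big => <-; rewrite cint1 cards1 -ltnNge.
have [e [e_sub card_e s1e te]] := edge_on_ends s1t big.
have eH : e \in H.
  apply: meets_full_in_H card_e _ => a b ab_full.
  case/orP: (minfull_hit st_min ab_full) => [s_ab | /andP[t_ab _]]; last by exists t.
  case: (boolP (t \in cint a b)) => t_ab; first by exists t.
  case: (boolP (ordS s \in cint a b)) => s1_ab; first by exists (ordS s).
  have ab_sub := cint_sub_before s_ab t_ab s1_ab.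
  by have := leq_trans (full_card ab_full) (subset_leq_card ab_sub); rewrite leqNgt small.
have s1t_full : full (ordS s) t by apply/existsP; exists e; rewrite eH e_sub.
by move: (minfull_min st_min (cint_succ_proper st)); rewrite s1t_full.
Qed.

Lemma minfull_pred s t : minfull s t ->
  exists s', [/\ minfull s' s, s' \in cint (ordS t) s & s' != s].
Proof.
move=> st_min; have st := minfull_neq st_min.
have big := card_after_minfull st_min.
have t1s : ordS t != s by apply: contraTneq big => ->; rewrite cint1 cards1 -ltnNge.
have [e [e_sub card_e t1e se]] := edge_on_ends t1s big.
have eH : e \in H.
  apply: meets_full_in_H card_e _ => a b ab_full.
  by case/orP: (minfull_hit st_min ab_full) => [s_ab | /andP[_ t1_ab]];
    [exists s | exists (ordS t)].
have t1s_full : full (ordS t) s by apply/existsP; exists e; rewrite eH e_sub.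
have [a [b [ab_min ab_sub]]] := exists_minfull t1s_full.
have [x x_ab x_st] := full_inter (minfull_full ab_min) (minfull_full st_min).
have xs : x = s := cint_succ_meet st (subsetP ab_sub _ x_ab) x_st.
rewrite xs in x_ab.
have bs : b = s.
  apply/eqP/negPn/negP => bs; rewrite eq_sym in bs.
  have := subsetP ab_sub _ (cint_succ_in x_ab bs).
  by rewrite (negbTE (ordS_notin_cint st)).
rewrite bs in ab_min ab_sub; exists a; split => //.
  exact: (subsetP ab_sub _ (cint_first a s)).
exact: minfull_neq ab_min.
Qed.

Lemma minfull_uniq s t t' : minfull s t -> minfull s t' -> t = t'.
Proof.
move=> st_min st'_min; apply/eqP/negPn/negP => tt'.
wlog t_in : t t' st_min st'_min tt' / t \in cint s t'.
  move=> W; case/orP: (cint_total s t t') => h; first exact: W h.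
  by apply: (W t' t) => //; rewrite eq_sym.
have proper : cint s t \proper cint s t'.
  apply/properP; split; first exact: cint_sub_prefix.
  exists t'; first exact: cint_last.
  by apply: contra tt' => t'_in; rewrite (cint_antisym t_in t'_in).
by move: (minfull_min st'_min proper); rewrite (minfull_full st_min).
Qed.

Definition starts := [set s | [exists t, minfull s t]].
Definition tau s := odflt s [pick t | minfull s t].

Lemma tauP s : s \in starts -> minfull s (tau s).
Proof.
rewrite inE => /existsP [t st_min]; rewrite /tau.
by case: pickP => [t' // | /(_ t)]; rewrite st_min.
Qed.

Lemma minfull_starts s t : minfull s t -> s \in starts.
Proof. by move=> st_min; rewrite inE; apply/existsP; exists t. Qed.

Lemma minfull_tau s t : minfull s t -> t = tau s.
Proof. by move=> st_min; apply: minfull_uniq st_min (tauP (minfull_starts st_min)). Qed.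

(* Every start is an end ([minfull_pred]), so by counting [tau] permutes the starts. *)
Lemma tau_starts s : s \in starts -> tau s \in starts.
Proof.
move=> s_start.
have sub : starts \subset tau @: starts.
  apply/subsetP => x x_start.
  have [s' [s'x_min _ _]] := minfull_pred (tauP x_start).
  by apply/imsetP; exists s'; [exact: minfull_starts s'x_min | exact: minfull_tau].
have -> : starts = tau @: starts by apply/eqP; rewrite eqEcard sub leq_imset_card.
exact: imset_f.
Qed.

(* H is nonempty (a single r-set is not separated from itself), so the whole
   cycle is full and contains a minimal full interval. *)
Lemma starts_nonempty : exists s, s \in starts.
Proof.
have [e _ card_e] : exists2 e : {set 'I_n}, e \subset setT & #|e| = r.
  by apply: subset_of_card; rewrite cardsT card_ord; lia.
have [h hH] : exists h, h \in H.
  case: (boolP (e \in H)) => eH; first by exists e.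
  have [h1 [h2 [u [u' [h1e h2e _ h1_in h2_out]]]]] := H_sat card_e eH.
  case: (set_0Vmem H) => [H0 | [h hH]]; last by exists h.
  move: h1e h2e; rewrite H0 setU0 !in_set1 => /eqP h1E /eqP h2E; subst h1 h2.
  have [y ye] : exists y, y \in e by apply/set0Pn; rewrite -card_gt0 card_e; lia.
  by move/setP: h2_out => /(_ y); rewrite in_setI ye (subsetP h1_in) ?in_set0.
have [y yh] : exists y, y \in h by apply/set0Pn; rewrite -card_gt0 (H_r hH); lia.
have y_full : full y (ord_pred y) by apply/existsP; exists h; rewrite hH cint_all subsetT.
have [a [b [ab_min _]]] := exists_minfull y_full.
by exists a; exact: minfull_starts ab_min.
Qed.

Definition starts_seq := [seq x <- enum 'I_n | x \in starts].

Lemma starts_seq_sorted : sorted (fun a b : 'I_n => a < b) starts_seq.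
Proof.
apply: sorted_filter; first by move=> ? ? ?; apply: ltn_trans.
by have := iota_ltn_sorted 0 n; rewrite -val_enum_ord sorted_map.
Qed.

Lemma mem_starts_seq x : (x \in starts_seq) = (x \in starts).
Proof. by rewrite mem_filter mem_enum andbT. Qed.

Section Indexing.
Variable x0 : 'I_n.
Local Notation m := (size starts_seq).
Local Notation q := (nth x0 starts_seq).

Lemma starts_incr : increasing m q.
Proof. exact/sorted_increasing/starts_seq_sorted. Qed.

Lemma start_at j : j < m -> q j \in starts.
Proof. by move=> jm; rewrite -mem_starts_seq mem_nth. Qed.

Lemma start_index s : s \in starts -> index s starts_seq < m /\ q (index s starts_seq) = s.
Proof. by rewrite -mem_starts_seq => s_in; rewrite index_mem s_in nth_index. Qed.

Definition next_idx j := index (tau (q j)) starts_seq.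

Lemma next_idxP j : j < m -> next_idx j < m /\ q (next_idx j) = tau (q j).
Proof. by move=> jm; apply/start_index/tau_starts/start_at. Qed.

Lemma next_minfull j : j < m -> minfull (q j) (q (next_idx j)).
Proof. by move=> jm; have [_ ->] := next_idxP jm; apply/tauP/start_at. Qed.

Lemma next_neq j : j < m -> next_idx j != j.
Proof. by move=> jm; apply: contra_neq (minfull_neq (next_minfull jm)) => ->. Qed.

Lemma prev_idx j : j < m -> exists k,
  [/\ k < m, next_idx k = j, cyc (next_idx j) k j, k != next_idx j & k != j].
Proof.
move=> jm; have [next_lt _] := next_idxP jm.
have [s' [s'_min s'_in s'_neq]] := minfull_pred (next_minfull jm).
have [km qk] := start_index (minfull_starts s'_min).
have next_j : q (next_idx j) != q j by rewrite eq_sym (minfull_neq (next_minfull jm)).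
have s'_next : s' != q (next_idx j).
  by apply: contraTneq s'_in => ->; exact: cint_succ_notin next_j.
exists (index s' starts_seq); split => //.
- have [next_k q_next_k] := next_idxP km.
  apply: (incr_inj starts_incr next_k jm); rewrite q_next_k qk.
  by apply/esym/minfull_tau.
- by rewrite -(incr_in_cint starts_incr) // qk; apply: (subsetP (cint_succ_sub next_j)).
- by apply: contraNneq s'_next => e; rewrite -qk e.
- by apply: contraNneq s'_neq => e; rewrite -qk e.
Qed.

(* Two minimal full intervals meet, so one contains the start of the other. *)
Lemma next_cross (a c : nat) : a < m -> c < m -> cyc a c (next_idx a) || cyc c a (next_idx c).
Proof.
move=> am cm; have [next_a _] := next_idxP am; have [next_c _] := next_idxP cm.
have [x x_a x_c] := full_inter (minfull_full (next_minfull am)) (minfull_full (next_minfull cm)).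
by have := cint_meet_cases x_a x_c; rewrite !(incr_in_cint starts_incr).
Qed.

Local Notation dist j := (cdist m j (next_idx j)).

(* The cyclic length of the minimal full intervals does not decrease from
   j to j+1: the predecessor k of j, lying before j, must cross [j+1, next j+1]. *)
Lemma dist_mono j : j < m -> dist j <= dist (if j.+1 < m then j.+1 else 0).
Proof.
move=> jm; set j' := (if j.+1 < m then j.+1 else 0).
have j'E : (j.+1 < m /\ j' = j.+1) \/ (j.+1 = m /\ j' = 0) by rewrite /j'; case: ifP; lia.
have j'm : j' < m by lia.
have [k [km next_k k_between k_next k_j]] := prev_idx jm.
have := next_cross km j'm; rewrite next_k.
have [next_j _] := next_idxP jm; have [next_j' _] := next_idxP j'm; have := next_neq jm.
move: k_between k_next k_j; rewrite /cyc.
by case: (cdistE m j (next_idx j)) => [[? ->]|[? ->]];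
   case: (cdistE m j' (next_idx j')) => [[? ->]|[? ->]]; lia.
Qed.

Lemma starts_count : exists l,
  [/\ 0 < l, m = (2 * l).+1 & forall j, j < m -> next_idx j = (j + l) %% m].
Proof.
have [s0 s0_start] := starts_nonempty.
have m_gt0 : 0 < m by have [? _] := start_index s0_start; lia.
have dist_const := cyclic_nondecreasing_const m_gt0 dist_mono.
have [next0 _] := next_idxP m_gt0.
have distE (a : nat) : (a <= next_idx a /\ dist a = next_idx a - a) \/
               (next_idx a < a /\ dist a = next_idx a + m - a) by apply: cdistE.
have l_gt0 : 0 < dist 0.
  by have := next_neq m_gt0; case: (distE 0) => [[? ->]|[? ->]]; lia.
have m_ge : (2 * dist 0).+1 <= m.
  have [k [km next_k k_between k_next k_0]] := prev_idx m_gt0.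
  have := dist_const k km; have := distE k; have := distE 0.
  by move: k_between k_next k_0; rewrite /cyc next_k; lia.
have m_le : m <= (2 * dist 0).+1.
  rewrite leqNgt; apply/negP => m_gt.
  have lm : (dist 0).+1 < m by lia.
  have := dist_const _ lm; have [? _] := next_idxP lm.
  have := next_cross m_gt0 lm; have := distE 0; have := distE (dist 0).+1.
  by rewrite /cyc; lia.
exists (dist 0); split => //; first lia.
move=> j jm; have [next_jm _] := next_idxP jm.
have := dist_const j jm; have := distE j.
by rewrite modn_lt_double; [case: ifP|]; lia.
Qed.

Lemma saturated_Kfam : exists l, [/\ 0 < l, m = (2 * l).+1,
  H = Kfam r l q & forall j, j < m -> r <= #|larc l q j|].
Proof.
have [l [l_gt0 m_eq next_eq]] := starts_count.
have larcE j : j < m -> larc l q j = cint (q j) (q (next_idx j)).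
  by move=> jm; rewrite /larc next_eq // m_eq.
have arc_full j : j < m -> full (q j) (q (next_idx j)).
  by move=> jm; exact/minfull_full/next_minfull.
have H_sub : H \subset Kfam r l q.
  apply/subsetP => h hH; rewrite in_Kfam (H_r hH) eqxx /=.
  apply/forallP => j; apply/set0Pn.
  have jm : j < m by rewrite m_eq.
  have [x xh x_arc] := full_meet (arc_full j jm) hH.
  by exists x; rewrite in_setI xh larcE.
exists l; split => //; last by move=> j jm; rewrite larcE //; exact/full_card/arc_full.
apply/eqP; rewrite eqEsubset H_sub /=; apply/subsetP => e eK; apply/negPn/negP => eH.
have card_e : #|e| = r by move: eK; rewrite in_Kfam => /andP[/eqP].
have eH_sub : e |: H \subset Kfam r l q by rewrite subUset sub1set eK H_sub.
have q_incr : increasing (2 * l).+1 q by rewrite -m_eq; exact: starts_incr.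
by apply: (Kfam_M1_free l_gt0 q_incr); exact: contains_M1_sub eH_sub (H_sat card_e eH).
Qed.

End Indexing.

End FullIntervals.

(* The tuple w with w_(2i+1) = q_i and w_(2i+2) = q_(l+1+i), whose sequence
   w_1, w_3, ..., w_(2l+1), w_2, ..., w_2l is q_0, ..., q_2l. *)
Definition unsplit n l (q : nat -> 'I_n) i := if odd i then q i./2 else q (l + i./2).

Lemma semi_seq_unsplit n l (s : seq 'I_n) x0 : size s = (2 * l).+1 ->
  semi_seq l (unsplit l (nth x0 s)) = s.
Proof.
move=> s_size; apply: (@eq_from_nth _ x0); first by rewrite size_semi_seq.
move=> i; rewrite size_semi_seq => im; rewrite nth_semi_seq // /unsplit.
have odd_2S k : odd (2 * k).+1 by rewrite /= mul2n odd_double.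
have half_2S k : (2 * k).+1./2 = k by rewrite mul2n -[(_.*2).+1]/(true + _.*2) half_bit_double.
case: ifP => i_le; first by rewrite odd_2S half_2S.
rewrite (_ : (2 * (i - l.+1)).+2 = 2 * (i - l)); last lia.
by rewrite mul2n odd_double doubleK; congr nth; lia.
Qed.

Lemma saturated_is_Hc n r (H : {set {set 'I_n}}) :
  2 <= r -> 2 * r <= n -> is_rcgh r H -> M1_saturated r H ->
  exists l, 1 <= l /\ exists w : nat -> 'I_n, r_valid r l w /\ H = Hc r l w.
Proof.
move=> r_ge2 n_ge2r H_r [H_free H_sat].
have x0 : 'I_n by exists 0; lia.
have [l [l_gt0 m_eq H_K big_arcs]] := saturated_Kfam r_ge2 n_ge2r H_r H_free H_sat x0.
set w := unsplit l (nth x0 (starts_seq H)).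
have semi_w : semi_seq l w = starts_seq H by apply: semi_seq_unsplit.
have := tarc_larc_forall (l := l) w x0 (fun A => r <= #|A|) (leq0n _).
rewrite rot0 semi_w => big_tarcs.
exists l; split => //; exists w; split; last first.
  by rewrite (Hc_Kfam (l := l) r w x0 (leq0n _)) rot0 semi_w.
split; first by exists 0; rewrite rot0 -/(semi_seq l w) semi_w; exact: starts_seq_sorted.
by apply/r_valid_sizes; apply/big_tarcs; rewrite -m_eq.
Qed.

Theorem theorem3p2 (r n : nat) (H : {set {set 'I_n}}) :
  2 <= r -> 2 * r <= n -> is_rcgh r H ->
  (M1_saturated r H <->
   exists l : nat, 1 <= l /\
     exists w : nat -> 'I_n, r_valid r l w /\ H = Hc r l w).
Proof.
move=> r_ge2 n_ge2r H_r; split; first exact: saturated_is_Hc.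
by case=> l [l_gt0 [w [w_valid ->]]]; exact: Hc_saturated.
Qed.
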